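(* Let $O$ be the origin of $\mathbb{R}^3$ and $R>0$. Let $x:[0,\tau_1]\to\mathbb{R}^3$ be a twice continuously differentiable trajectory with nowhere-vanishing velocity $\dot x(\tau)\neq 0$, satisfying the central-attraction equation $\ddot x(\tau) = -\kappa(\tau)\,x(\tau)$ with $\kappa(\tau)>0$ for all $\tau$. Let $A=x(0)$ with $|A|<R$, and suppose the trajectory reaches the sphere $\{|p|=R\}$, with $B = x(\tau_B)$ the first point where $|x(\tau)|=R$. Let $d=\dot x(0)/|\dot x(0)|$ be the initial direction, and let $P = A + t^\ast d$, where $t^\ast>0$ is the unique positive number with $|A+t^\ast d| = R$. Let $L_{AB}=\int_0^{\tau_B}|\dot x(\tau)|\,d\tau$ be the arclength of the trajectory from $A$ to $B$. Then $$L_{AB}\ \geq\ |AP|.$$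
   Context: This models a light ray in the near-field ball of radius $R$ around a black hole centered at $O$, with gravity approximated by Newtonian attraction toward the center, so that the acceleration is always directed toward $O$ and bends the path toward the center. $|AP|$ denotes the Euclidean distance between $A$ and $P$. *)

From Stdlib Require Import Reals.
From Coquelicot Require Import Coquelicot.
Open Scope R_scope.

Definition norm3 (a b c : R) : R := sqrt (a ^ 2 + b ^ 2 + c ^ 2).

Definition C2_on (a b : R) (f : R -> R) : Prop :=
  forall t, a <= t <= b ->
    ex_derive f t /\ ex_derive (Derive f) t /\ continuous (Derive (Derive f)) t.

From Stdlib Require Import Reals Lra Psatz.
From Coquelicot Require Import Coquelicot.
Open Scope R_scope.

(** Let [S(t)] be the arclength and [T = x'/|x'|] the unit tangent.  For a central attraction
    [x'' = -kappa x] one finds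
    [(x . T)' = |x'| - kappa (|x|^2 |x'|^2 - (x . x')^2) / |x'|^3 <= |x'|]
    by Cauchy-Schwarz, hence [x . T <= A . d + S].  Therefore [|x|^2 - |A + S d|^2] has derivative
    [2 |x'| (x . T - A . d - S) <= 0]: the trajectory is never farther from [O] than the point
    [A + S(t) d] of the tangent ray at the same arclength.  At [B] this gives
    [R^2 <= |A + L_AB d|^2], and as [s |-> |A + s d|^2 - R^2] is negative at [0] and vanishes at
    [t*], it is negative for [0 <= s < t*], so [L_AB >= t* = |AP|]. *)

Definition sqnorm3 (a b c : R) : R := a ^ 2 + b ^ 2 + c ^ 2.

Lemma sqnorm3_ge0 (a b c : R) : 0 <= sqnorm3 a b c.
Proof.
  unfold sqnorm3.
  pose proof (pow2_ge_0 a); pose proof (pow2_ge_0 b); pose proof (pow2_ge_0 c); lra.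
Qed.

Lemma norm3_sqr (a b c : R) : norm3 a b c ^ 2 = sqnorm3 a b c.
Proof. apply pow2_sqrt, sqnorm3_ge0. Qed.

Lemma norm3_ge0 (a b c : R) : 0 <= norm3 a b c.
Proof. apply sqrt_pos. Qed.

Lemma norm3_gt0 (a b c : R) : norm3 a b c <> 0 -> 0 < norm3 a b c.
Proof. intros Hneq0. pose proof (norm3_ge0 a b c). lra. Qed.

Lemma sqnorm3_normalize (v1 v2 v3 : R) : norm3 v1 v2 v3 <> 0 ->
  sqnorm3 (v1 / norm3 v1 v2 v3) (v2 / norm3 v1 v2 v3) (v3 / norm3 v1 v2 v3) = 1.
Proof.
  intros Hneq0. set (n := norm3 v1 v2 v3) in *.
  replace (sqnorm3 (v1 / n) (v2 / n) (v3 / n)) with (sqnorm3 v1 v2 v3 / n ^ 2)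
    by (unfold sqnorm3; field; exact Hneq0).
  unfold n. rewrite norm3_sqr. field.
  rewrite <- norm3_sqr. apply pow_nonzero, Hneq0.
Qed.

Lemma norm3_scale_unit (d1 d2 d3 s : R) : sqnorm3 d1 d2 d3 = 1 -> 0 <= s ->
  norm3 (s * d1) (s * d2) (s * d3) = s.
Proof.
  intros Hunit Hs. unfold norm3.
  replace ((s * d1) ^ 2 + (s * d2) ^ 2 + (s * d3) ^ 2) with (s ^ 2 * sqnorm3 d1 d2 d3)
    by (unfold sqnorm3; ring).
  rewrite Hunit, Rmult_1_r. apply sqrt_pow2, Hs.
Qed.

Lemma norm3_ray_step (a1 a2 a3 v1 v2 v3 s : R) : norm3 v1 v2 v3 <> 0 -> 0 <= s ->
  let n := norm3 v1 v2 v3 in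
  norm3 (a1 + s * (v1 / n) - a1) (a2 + s * (v2 / n) - a2) (a3 + s * (v3 / n) - a3) = s.
Proof.
  intros Hneq0 Hs n.
  replace (a1 + s * (v1 / n) - a1) with (s * (v1 / n)) by ring.
  replace (a2 + s * (v2 / n) - a2) with (s * (v2 / n)) by ring.
  replace (a3 + s * (v3 / n) - a3) with (s * (v3 / n)) by ring.
  apply norm3_scale_unit; [apply sqnorm3_normalize, Hneq0 | exact Hs].
Qed.

Lemma sqnorm3_ray (a1 a2 a3 v1 v2 v3 s : R) : norm3 v1 v2 v3 <> 0 ->
  let n := norm3 v1 v2 v3 in
  sqnorm3 (a1 + s * (v1 / n)) (a2 + s * (v2 / n)) (a3 + s * (v3 / n))
  = sqnorm3 a1 a2 a3 + 2 * s * ((a1 * v1 + a2 * v2 + a3 * v3) / n) + s ^ 2.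
Proof.
  intros Hneq0 n.
  transitivity (sqnorm3 a1 a2 a3 + 2 * s * (a1 * (v1 / n) + a2 * (v2 / n) + a3 * (v3 / n))
                + s ^ 2 * sqnorm3 (v1 / n) (v2 / n) (v3 / n)).
  - unfold sqnorm3. ring.
  - unfold n. rewrite sqnorm3_normalize by exact Hneq0. field. exact Hneq0.
Qed.

Lemma cauchy_schwarz3 (a1 a2 a3 b1 b2 b3 : R) :
  (a1 * b1 + a2 * b2 + a3 * b3) ^ 2 <= sqnorm3 a1 a2 a3 * sqnorm3 b1 b2 b3.
Proof.
  assert (Hlagrange : sqnorm3 a1 a2 a3 * sqnorm3 b1 b2 b3 - (a1 * b1 + a2 * b2 + a3 * b3) ^ 2
    = (a1 * b2 - a2 * b1) ^ 2 + (a2 * b3 - a3 * b2) ^ 2 + (a1 * b3 - a3 * b1) ^ 2)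
    by (unfold sqnorm3; ring).
  pose proof (pow2_ge_0 (a1 * b2 - a2 * b1)).
  pose proof (pow2_ge_0 (a2 * b3 - a3 * b2)).
  pose proof (pow2_ge_0 (a1 * b3 - a3 * b1)).
  lra.
Qed.

Lemma le_of_quadratic_crossing (a c r t s : R) :
  a < r -> 0 < t -> 0 <= s ->
  a + 2 * t * c + t ^ 2 = r -> r <= a + 2 * s * c + s ^ 2 -> t <= s.
Proof.
  intros Har Ht Hs Hr Hsr.
  assert (Hslope : 0 < t + 2 * c) by nra.
  destruct (Rle_lt_dec t s); [assumption|].
  nra.
Qed.

Lemma nonincreasing_of_derive_nonpos (f f' : R -> R) (a b : R) : a <= b ->
  (forall t, a <= t <= b -> is_derive f t (f' t)) ->
  (forall t, a <= t <= b -> f' t <= 0) -> f b <= f a.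
Proof.
  intros Hab Hder Hsign.
  destruct (MVT_gen f a b f') as [c [Hc Hmvt]];
    rewrite ?Rmin_left, ?Rmax_right in * by lra.
  - intros t Ht. apply Hder. lra.
  - intros t Ht. apply continuity_pt_filterlim.
    apply (ex_derive_continuous f t). exists (f' t). apply Hder, Ht.
  - pose proof (Hsign c Hc). nra.
Qed.

Lemma clamp_continuous (a b t : R) : a <= b -> continuous (fun s => Rmax a (Rmin b s)) t.
Proof.
  intros Hab. apply continuity_pt_filterlim.
  intros eps Heps. exists eps. split; [lra|].
  intros s [_ Hs]. simpl in *. unfold R_dist, Rdist, Rmax, Rmin in *.
  repeat destruct (Rle_dec _ _); unfold Rabs in *; repeat destruct (Rcase_abs _); lra.
Qed.

(* Nothing is known about [f] outside [[a, b]], so [RInt f a] need not be differentiable at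
   [a] or [b]; integrating [f] composed with the clamp onto [[a, b]] avoids this. *)
Lemma primitive_on (f : R -> R) (a b : R) : a <= b ->
  (forall t, a <= t <= b -> continuous f t) ->
  exists F : R -> R, forall t, a <= t <= b -> is_derive F t (f t) /\ F t = RInt f a t.
Proof.
  intros Hab Hcont.
  set (clamp := fun s => Rmax a (Rmin b s)).
  assert (Hclamp_in : forall s, a <= clamp s <= b).
  { intros s. unfold clamp, Rmax, Rmin. repeat destruct Rle_dec; lra. }
  assert (Hclamp_id : forall s, a <= s <= b -> clamp s = s).
  { intros s Hs. unfold clamp, Rmax, Rmin. repeat destruct Rle_dec; lra. }
  set (g := fun u => f (clamp u)).
  assert (Hg_cont : forall s, continuous g s).
  { intros s. apply (continuous_comp clamp f);
      [apply clamp_continuous, Hab | apply Hcont, Hclamp_in]. }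
  exists (RInt g a). intros t Ht. split.
  - replace (f t) with (g t) by (unfold g; rewrite Hclamp_id; auto).
    apply is_derive_RInt with (a := a); [|apply Hg_cont].
    apply filter_forall. intros u.
    apply (RInt_correct (V := R_CompleteNormedModule)), ex_RInt_continuous.
    intros; apply Hg_cont.
  - apply RInt_ext. rewrite Rmin_left, Rmax_right by lra.
    intros u Hu. unfold g. rewrite Hclamp_id; [reflexivity | lra].
Qed.

Lemma C2_on_derivable2 (a b : R) (f : R -> R) : C2_on a b f ->
  forall t, a <= t <= b -> ex_derive f t /\ ex_derive (Derive f) t.
Proof. intros Hf t Ht. destruct (Hf t Ht) as [? [? _]]. tauto. Qed.

(* [auto_derive] leaves eta-expanded functions such as [fun x => x1 x], which [ring] would treat
   as atoms distinct from [x1]. *)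
Ltac eta_reduce :=
  repeat match goal with |- context [fun x => ?f x] => change (fun x => f x) with f end.

Section CentralAttraction.

Variables (tau1 : R) (x1 x2 x3 kappa : R -> R).

Hypothesis x1_derivable2 : forall t, 0 <= t <= tau1 -> ex_derive x1 t /\ ex_derive (Derive x1) t.
Hypothesis x2_derivable2 : forall t, 0 <= t <= tau1 -> ex_derive x2 t /\ ex_derive (Derive x2) t.
Hypothesis x3_derivable2 : forall t, 0 <= t <= tau1 -> ex_derive x3 t /\ ex_derive (Derive x3) t.
Hypothesis velocity_neq0 : forall t, 0 <= t <= tau1 ->
  norm3 (Derive x1 t) (Derive x2 t) (Derive x3 t) <> 0.
Hypothesis kappa_ge0 : forall t, 0 <= t <= tau1 -> 0 <= kappa t.
Hypothesis central_force : forall t, 0 <= t <= tau1 ->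
  Derive (Derive x1) t = - kappa t * x1 t /\
  Derive (Derive x2) t = - kappa t * x2 t /\
  Derive (Derive x3) t = - kappa t * x3 t.

Definition dist2 (t : R) : R := sqnorm3 (x1 t) (x2 t) (x3 t).
Definition speed (t : R) : R := norm3 (Derive x1 t) (Derive x2 t) (Derive x3 t).
Definition radial (t : R) : R := x1 t * Derive x1 t + x2 t * Derive x2 t + x3 t * Derive x3 t.
Definition tangential (t : R) : R := radial t / speed t.

Lemma radial_sqr_le t : radial t ^ 2 <= dist2 t * speed t ^ 2.
Proof. unfold radial, dist2, speed. rewrite norm3_sqr. apply cauchy_schwarz3. Qed.

Lemma speed_gt0 t : 0 <= t <= tau1 -> 0 < speed t.
Proof. intros Ht. apply norm3_gt0, velocity_neq0, Ht. Qed.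

Lemma is_derive_dist2 t : 0 <= t <= tau1 -> is_derive dist2 t (2 * radial t).
Proof.
  intros Ht.
  destruct (x1_derivable2 t Ht) as [? _], (x2_derivable2 t Ht) as [? _],
    (x3_derivable2 t Ht) as [? _].
  unfold dist2, sqnorm3, radial. auto_derive; [tauto | eta_reduce; ring].
Qed.

Lemma is_derive_radial t : 0 <= t <= tau1 ->
  is_derive radial t (speed t ^ 2 - kappa t * dist2 t).
Proof.
  intros Ht.
  destruct (x1_derivable2 t Ht), (x2_derivable2 t Ht), (x3_derivable2 t Ht).
  destruct (central_force t Ht) as [E1 [E2 E3]].
  unfold radial. auto_derive; [tauto|]. eta_reduce.
  unfold speed, dist2. rewrite norm3_sqr, E1, E2, E3. unfold sqnorm3. ring.
Qed.

Lemma is_derive_speed t : 0 <= t <= tau1 -> is_derive speed t (- kappa t * radial t / speed t).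
Proof.
  intros Ht.
  destruct (x1_derivable2 t Ht), (x2_derivable2 t Ht), (x3_derivable2 t Ht).
  destruct (central_force t Ht) as [E1 [E2 E3]].
  pose proof (speed_gt0 t Ht) as Hspeed.
  assert (Hspeed2 : is_derive (fun s => sqnorm3 (Derive x1 s) (Derive x2 s) (Derive x3 s)) t
    (-2 * kappa t * radial t)).
  { unfold sqnorm3. auto_derive; [tauto|]. eta_reduce.
    rewrite E1, E2, E3. unfold radial. ring. }
  replace (- kappa t * radial t / speed t) with (-2 * kappa t * radial t / (2 * speed t))
    by (field; lra).
  apply (is_derive_sqrt _ t _ Hspeed2).
  rewrite <- norm3_sqr. apply pow_lt, Hspeed.
Qed.

Lemma continuous_speed t : 0 <= t <= tau1 -> continuous speed t.
Proof. intros Ht. apply (ex_derive_continuous speed t). eexists. apply is_derive_speed, Ht. Qed.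

Lemma is_derive_tangential t : 0 <= t <= tau1 ->
  is_derive tangential t
    (speed t - kappa t * (dist2 t * speed t ^ 2 - radial t ^ 2) / speed t ^ 3).
Proof.
  intros Ht. pose proof (speed_gt0 t Ht) as Hspeed.
  unfold tangential.
  replace (speed t - kappa t * (dist2 t * speed t ^ 2 - radial t ^ 2) / speed t ^ 3)
    with (((speed t ^ 2 - kappa t * dist2 t) * speed t
           - radial t * (- kappa t * radial t / speed t)) / speed t ^ 2) by (field; lra).
  apply is_derive_div; [apply is_derive_radial, Ht | apply is_derive_speed, Ht | lra].
Qed.

Variable arclength : R -> R.
Hypothesis arclength0 : arclength 0 = 0.
Hypothesis is_derive_arclength : forall t, 0 <= t <= tau1 -> is_derive arclength t (speed t).

Lemma arclength_ge0 t : 0 <= t <= tau1 -> 0 <= arclength t.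
Proof.
  intros Ht.
  assert (Hdecr : - arclength t <= - arclength 0).
  { apply (nonincreasing_of_derive_nonpos (fun s => - arclength s) (fun s => - speed s));
      [lra | |].
    - intros s Hs. apply (is_derive_opp arclength s (speed s)), is_derive_arclength. lra.
    - intros s Hs. pose proof (speed_gt0 s ltac:(lra)). lra. }
  lra.
Qed.

Lemma tangential_le t : 0 <= t <= tau1 -> tangential t <= tangential 0 + arclength t.
Proof.
  intros Ht.
  assert (Hdecr : tangential t - arclength t <= tangential 0 - arclength 0).
  { apply (nonincreasing_of_derive_nonpos (fun s => tangential s - arclength s)
      (fun s => - kappa s * (dist2 s * speed s ^ 2 - radial s ^ 2) / speed s ^ 3)); [lra | |].
    - intros s Hs. cbv beta.
      replace (- kappa s * (dist2 s * speed s ^ 2 - radial s ^ 2) / speed s ^ 3)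
        with ((speed s - kappa s * (dist2 s * speed s ^ 2 - radial s ^ 2) / speed s ^ 3)
              - speed s) by lra.
      exact (is_derive_minus _ _ _ _ _
               (is_derive_tangential s ltac:(lra)) (is_derive_arclength s ltac:(lra))).
    - intros s Hs. assert (Hs' : 0 <= s <= tau1) by lra.
      pose proof (speed_gt0 s Hs'). pose proof (radial_sqr_le s).
      assert (0 <= kappa s * (dist2 s * speed s ^ 2 - radial s ^ 2) / speed s ^ 3).
      { apply Rdiv_le_0_compat; [apply Rmult_le_pos | apply pow_lt]; [apply kappa_ge0 | ..]; lra. }
      lra. }
  rewrite arclength0 in Hdecr. lra.
Qed.

Lemma dist2_le_ray t : 0 <= t <= tau1 ->
  dist2 t <= dist2 0 + 2 * arclength t * tangential 0 + arclength t ^ 2.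
Proof.
  intros Ht.
  set (c := tangential 0).
  assert (Hdecr : dist2 t - (dist2 0 + 2 * arclength t * c + arclength t ^ 2)
                  <= dist2 0 - (dist2 0 + 2 * arclength 0 * c + arclength 0 ^ 2)).
  { apply (nonincreasing_of_derive_nonpos
      (fun s => dist2 s - (dist2 0 + 2 * arclength s * c + arclength s ^ 2))
      (fun s => 2 * speed s * (tangential s - c - arclength s))); [lra | |].
    - intros s Hs. assert (Hs' : 0 <= s <= tau1) by lra.
      pose proof (speed_gt0 s Hs').
      auto_derive.
      + repeat split; eexists;
          first [apply is_derive_dist2, Hs' | apply is_derive_arclength, Hs'].
      + eta_reduce. rewrite (is_derive_unique _ _ _ (is_derive_dist2 s Hs')),
          (is_derive_unique _ _ _ (is_derive_arclength s Hs')).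
        unfold tangential. field. lra.
    - intros s Hs. assert (Hs' : 0 <= s <= tau1) by lra.
      pose proof (speed_gt0 s Hs'). pose proof (tangential_le s Hs'). unfold c. nra. }
  rewrite arclength0 in Hdecr. lra.
Qed.

End CentralAttraction.

Theorem proposition1
  (Rad tau1 tauB tstar : R) (x1 x2 x3 kappa : R -> R) :
  0 < Rad ->
  0 <= tau1 ->
  C2_on 0 tau1 x1 -> C2_on 0 tau1 x2 -> C2_on 0 tau1 x3 ->
  (* nowhere-vanishing velocity *)
  (forall t, 0 <= t <= tau1 ->
     norm3 (Derive x1 t) (Derive x2 t) (Derive x3 t) <> 0) ->
  (* central attraction: x'' = - kappa x with kappa > 0 *)
  (forall t, 0 <= t <= tau1 -> 0 < kappa t) ->
  (forall t, 0 <= t <= tau1 ->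
     Derive (Derive x1) t = - kappa t * x1 t /\
     Derive (Derive x2) t = - kappa t * x2 t /\
     Derive (Derive x3) t = - kappa t * x3 t) ->
  (* A = x(0) lies strictly inside the ball of radius Rad *)
  norm3 (x1 0) (x2 0) (x3 0) < Rad ->
  (* B = x(tauB) is the first point with |x| = Rad *)
  0 <= tauB <= tau1 ->
  norm3 (x1 tauB) (x2 tauB) (x3 tauB) = Rad ->
  (forall t, 0 <= t < tauB -> norm3 (x1 t) (x2 t) (x3 t) <> Rad) ->
  (* P = A + tstar d, d = x'(0)/|x'(0)|, with tstar > 0 and |P| = Rad *)
  let v0 := norm3 (Derive x1 0) (Derive x2 0) (Derive x3 0) in
  let P1 := x1 0 + tstar * (Derive x1 0 / v0) in
  let P2 := x2 0 + tstar * (Derive x2 0 / v0) in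
  let P3 := x3 0 + tstar * (Derive x3 0 / v0) in
  0 < tstar ->
  norm3 P1 P2 P3 = Rad ->
  (* arclength L_AB >= |AP| *)
  RInt (fun t => norm3 (Derive x1 t) (Derive x2 t) (Derive x3 t)) 0 tauB
    >= norm3 (P1 - x1 0) (P2 - x2 0) (P3 - x3 0).
Proof.
  intros _ Htau1 C1 C2 C3 Hv Hk Hforce HA HtauB HB _ v0 P1 P2 P3 Htstar HP.
  pose proof (C2_on_derivable2 _ _ _ C1) as D1.
  pose proof (C2_on_derivable2 _ _ _ C2) as D2.
  pose proof (C2_on_derivable2 _ _ _ C3) as D3.
  assert (Hk0 : forall t, 0 <= t <= tau1 -> 0 <= kappa t) by (intros t Ht; apply Rlt_le, Hk, Ht).
  destruct (primitive_on (speed x1 x2 x3) 0 tau1 Htau1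
              (continuous_speed tau1 x1 x2 x3 kappa D1 D2 D3 Hv Hforce)) as [S HS].
  assert (HS0 : S 0 = 0) by (rewrite (proj2 (HS 0 ltac:(lra))), RInt_point; reflexivity).
  assert (HSder : forall t, 0 <= t <= tau1 -> is_derive S t (speed x1 x2 x3 t))
    by (intros t Ht; apply HS, Ht).
  replace (RInt _ 0 tauB) with (S tauB) by apply HS, HtauB.
  unfold P1, P2, P3, v0 in *.
  rewrite norm3_ray_step by (try apply Hv; lra).
  apply Rle_ge, (le_of_quadratic_crossing (dist2 x1 x2 x3 0) (tangential x1 x2 x3 0) (Rad ^ 2)).
  - unfold dist2. rewrite <- norm3_sqr. pose proof (norm3_ge0 (x1 0) (x2 0) (x3 0)). nra.
  - exact Htstar.
  - apply (arclength_ge0 tau1 x1 x2 x3 Hv S HS0 HSder). lra.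
  - rewrite <- HP, norm3_sqr, sqnorm3_ray by (apply Hv; lra). reflexivity.
  - rewrite <- HB, norm3_sqr.
    apply (dist2_le_ray tau1 x1 x2 x3 kappa D1 D2 D3 Hv Hk0 Hforce S HS0 HSder). lra.
Qed.
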